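(* Let $X_1,\dots,X_n$ be (possibly dependent) identically distributed component lifetimes with common distribution that of $X$, and let $\tau_1(\mathbf X)$ and $\tau_2(\mathbf X)$ be lifetimes of two coherent systems built on such components, with domination functions $h_1$ and $h_2$ respectively, i.e. $\bar F_{\tau_i(\mathbf X)}(x)=h_i(\bar F_X(x))$, $i=1,2$. Let $H_i(p)=p h_i'(p)/h_i(p)$, $p\in(0,1)$. Then $\tau_1(\mathbf X)\underset{c}{\prec}\tau_2(\mathbf X)$ (resp. $\tau_1(\mathbf X)\underset{c}{\succ}\tau_2(\mathbf X)$) if and only if $H_1(p)/H_2(p)$ is decreasing (resp. increasing) in $p\in(0,1)$.
   Context: All random variables are non-negative and absolutely continuous with support $[0,\infty)$. For a random variable $W$: density $f_W$, survival function $\bar F_W$, hazard rate $r_W=f_W/\bar F_W$. $U\underset{c}{\prec}V$ means $r_U(x)/r_V(x)$ is increasing in $x\ge0$; $U\underset{c}{\succ}V$ means $V\underset{c}{\prec}U$. The domination function $h:[0,1]\to[0,1]$ of a coherent system with identically distributed (possibly dependent) components is the function, depending on the structure and the survival copula, with system reliability $h(\bar F_X(x))$; it is increasing, continuous, $h(0)=0$, $h(1)=1$, assumed differentiable. ''Increasing'' means non-decreasing, ''decreasing'' means non-increasing. *)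

From Stdlib Require Import Reals.
From Coquelicot Require Import Coquelicot.
Open Scope R_scope.

(* Survival function Fbar_W(x) = P(W > x) of a non-negative absolutely
   continuous lifetime W with support [0, +oo), viewed as a function R -> R.
   The density is taken to be f_W = - Fbar_W' (derivative), assumed to exist
   and be positive at every x > 0 (so that the hazard rate and ratios of
   hazard rates are well defined there). *)
Definition lifetime_survival (S : R -> R) : Prop :=
  (forall x, x <= 0 -> S x = 1) /\
  (forall x, continuous S x) /\
  (forall x y, 0 <= x -> x < y -> S y < S x) /\
  is_lim S p_infty 0 /\
  (forall x, 0 < x -> ex_derive S x /\ Derive S x < 0).

Definition density (S : R -> R) (x : R) : R := - Derive S x.

Definition hazard (S : R -> R) (x : R) : R := density S x / S x.

(* Domination function h : [0,1] -> [0,1] (only its values on [0,1] matter):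
   increasing, continuous, h 0 = 0, h 1 = 1, differentiable (on (0,1)). *)
Definition domination_function (h : R -> R) : Prop :=
  h 0 = 0 /\ h 1 = 1 /\
  (forall p q, 0 <= p -> p <= q -> q <= 1 -> h p <= h q) /\
  (forall p, 0 <= p <= 1 ->
     filterlim h (within (fun y => 0 <= y <= 1) (locally p)) (locally (h p))) /\
  (forall p, 0 < p < 1 -> ex_derive h p).

Definition Hfun (h : R -> R) (p : R) : R := p * Derive h p / h p.

Definition c_prec (SU SV : R -> R) : Prop :=
  forall x y, 0 < x -> x <= y -> hazard SU x / hazard SV x <= hazard SU y / hazard SV y.

Definition incr_01 (g : R -> R) : Prop := forall p q, 0 < p -> p <= q -> q < 1 -> g p <= g q.
Definition decr_01 (g : R -> R) : Prop := forall p q, 0 < p -> p <= q -> q < 1 -> g q <= g p.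

(* The hazard rate of a system with survival function h ∘ F̄_X is
   r_τ(x) = H(F̄_X(x)) r_X(x), by the chain rule.  Hence r_τ1 / r_τ2 = (H1/H2) ∘ F̄_X,
   and since F̄_X is a decreasing bijection of (0,∞) onto (0,1), this ratio
   increases in x exactly when H1/H2 decreases in p.  The second equivalence
   is the first one with the two systems exchanged, as H2/H1 = (H1/H2)⁻¹ > 0. *)

From Stdlib Require Import Reals Lra.
From Coquelicot Require Import Coquelicot.
Open Scope R_scope.

Section Survival.

Variable S : R -> R.
Hypothesis HS : lifetime_survival S.

Lemma survival_eventually_small e : 0 < e -> exists M, forall y, M < y -> Rabs (S y) < e.
Proof.
  intros He. destruct HS as (_ & _ & _ & Hlim & _).
  apply is_lim_spec in Hlim. destruct (Hlim (mkposreal e He)) as [M HM].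
  exists M. intros y Hy. specialize (HM y Hy). simpl in HM.
  rewrite Rminus_0_r in HM. exact HM.
Qed.

Lemma survival_pos x : 0 < S x.
Proof.
  destruct HS as (Hle0 & _ & Hdecr & _ & _).
  destruct (Rle_or_lt x 0) as [Hx | Hx]; [rewrite Hle0 by exact Hx; lra |].
  destruct (Rlt_or_le 0 (S (x + 1))) as [Hpos | Hnpos].
  - assert (S (x + 1) < S x) by (apply Hdecr; lra). lra.
  - exfalso.
    (* past x + 2, S stays below S (x + 2) < 0, which keeps it away from its limit 0 *)
    assert (S (x + 2) < S (x + 1)) by (apply Hdecr; lra).
    destruct (survival_eventually_small (- S (x + 2))) as [M HM]; [lra |].
    set (y := Rmax M (x + 2) + 1).
    assert (M < y) by (unfold y; generalize (Rmax_l M (x + 2)); lra).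
    assert (S y < S (x + 2)) by (apply Hdecr; unfold y; generalize (Rmax_r M (x + 2)); lra).
    specialize (HM y ltac:(assumption)). apply Rabs_def2 in HM. lra.
Qed.

Lemma survival_lt_1 x : 0 < x -> S x < 1.
Proof.
  intros Hx. destruct HS as (Hle0 & _ & Hdecr & _ & _).
  rewrite <- (Hle0 0) by lra. apply Hdecr; lra.
Qed.

Lemma survival_onto p : 0 < p < 1 -> exists x, 0 < x /\ S x = p.
Proof.
  intros Hp. destruct HS as (Hle0 & Hcont & _ & _ & _).
  destruct (survival_eventually_small p) as [M HM]; [lra |].
  set (b := Rmax M 0 + 1).
  assert (Hb : 0 < b) by (unfold b; generalize (Rmax_r M 0); lra).
  assert (HSb : Rabs (S b) < p) by (apply HM; unfold b; generalize (Rmax_l M 0); lra).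
  apply Rabs_def2 in HSb.
  assert (Hgap : continuity (fun t => p - S t)).
  { intro t. apply continuity_pt_minus.
    - apply continuity_pt_const. intros u v; reflexivity.
    - apply continuity_pt_filterlim, Hcont. }
  destruct (IVT (fun t => p - S t) 0 b Hgap Hb) as (z & Hz & Hpz).
  - rewrite Hle0 by lra. lra.
  - lra.
  - exists z. split; [| lra].
    destruct Hz as [[Hz0 | Hz0] _]; [assumption |].
    subst z. rewrite Hle0 in Hpz by lra. lra.
Qed.

Lemma survival_comp_incr_iff (g : R -> R) :
  (forall x y, 0 < x -> x <= y -> g (S x) <= g (S y)) <-> decr_01 g.
Proof.
  destruct HS as (_ & _ & Hdecr & _ & _). split.
  - intros Hg p q Hp Hpq Hq.
    destruct (survival_onto q) as (x & Hx & <-); [lra |].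
    destruct (survival_onto p) as (y & Hy & <-); [lra |].
    apply Hg; [assumption |].
    destruct (Rle_or_lt x y) as [| Hyx]; [assumption |].
    assert (S x < S y) by (apply Hdecr; lra). lra.
  - intros Hg x y Hx Hxy.
    apply Hg; [apply survival_pos | | apply survival_lt_1; lra].
    destruct Hxy as [Hxy | <-]; [left; apply Hdecr |]; lra.
Qed.

End Survival.

Lemma domination_pos h :
  domination_function h -> (forall p, 0 < p < 1 -> 0 < Derive h p) ->
  forall p, 0 < p < 1 -> 0 < h p.
Proof.
  intros (H0 & _ & Hmono & _) Hderiv p Hp.
  assert (Hnneg : 0 <= h p) by (rewrite <- H0; apply Hmono; lra).
  destruct Hnneg as [| Hzero]; [assumption | exfalso].
  (* h vanishes on [0, p], so its derivative at p/2 is 0 *)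
  assert (Derive h (p / 2) = Derive (fun _ => 0) (p / 2)).
  { apply Derive_ext_loc. assert (Hr : 0 < p / 2) by lra.
    exists (mkposreal _ Hr). intros t Ht. change (Rabs (t - p / 2) < p / 2) in Ht.
    apply Rabs_def2 in Ht.
    assert (h 0 <= h t) by (apply Hmono; lra).
    assert (h t <= h p) by (apply Hmono; lra). lra. }
  specialize (Hderiv (p / 2) ltac:(lra)).
  rewrite Derive_const in *. lra.
Qed.

Lemma Hfun_pos h :
  domination_function h -> (forall p, 0 < p < 1 -> 0 < Derive h p) ->
  forall p, 0 < p < 1 -> 0 < Hfun h p.
Proof.
  intros Hh Hderiv p Hp. unfold Hfun.
  assert (0 < h p) by exact (domination_pos h Hh Hderiv p Hp).
  assert (0 < Derive h p) by exact (Hderiv p Hp).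
  apply Rdiv_lt_0_compat; [apply Rmult_lt_0_compat |]; lra.
Qed.

Lemma hazard_comp (S h : R -> R) x :
  S x <> 0 -> h (S x) <> 0 -> ex_derive h (S x) -> ex_derive S x ->
  hazard (fun t => h (S t)) x = Hfun h (S x) * hazard S x.
Proof.
  intros HSx Hhx Hh HSd. unfold hazard, density, Hfun.
  rewrite Derive_comp by assumption. field. split; assumption.
Qed.

Lemma hazard_ratio_comp S h1 h2 :
  lifetime_survival S ->
  domination_function h1 -> domination_function h2 ->
  (forall p, 0 < p < 1 -> 0 < Derive h1 p) ->
  (forall p, 0 < p < 1 -> 0 < Derive h2 p) ->
  forall x, 0 < x ->
  hazard (fun t => h1 (S t)) x / hazard (fun t => h2 (S t)) x
  = Hfun h1 (S x) / Hfun h2 (S x).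
Proof.
  intros HS Hh1 Hh2 Hd1 Hd2 x Hx.
  assert (HSx : 0 < S x < 1) by (split; [apply survival_pos | apply survival_lt_1]; assumption).
  assert (0 < h1 (S x)) by exact (domination_pos h1 Hh1 Hd1 _ HSx).
  assert (0 < h2 (S x)) by exact (domination_pos h2 Hh2 Hd2 _ HSx).
  assert (0 < Hfun h2 (S x)) by exact (Hfun_pos h2 Hh2 Hd2 _ HSx).
  assert (ex_derive h1 (S x)) by (apply Hh1; exact HSx).
  assert (ex_derive h2 (S x)) by (apply Hh2; exact HSx).
  destruct HS as (_ & _ & _ & _ & HSd). destruct (HSd x Hx) as [HSex HSneg].
  rewrite (hazard_comp S h1), (hazard_comp S h2) by (assumption || lra).
  assert (0 < hazard S x) by (unfold hazard, density; apply Rdiv_lt_0_compat; lra).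
  field. lra.
Qed.

Lemma c_prec_comp_iff S h1 h2 :
  lifetime_survival S ->
  domination_function h1 -> domination_function h2 ->
  (forall p, 0 < p < 1 -> 0 < Derive h1 p) ->
  (forall p, 0 < p < 1 -> 0 < Derive h2 p) ->
  c_prec (fun x => h1 (S x)) (fun x => h2 (S x)) <->
  decr_01 (fun p => Hfun h1 p / Hfun h2 p).
Proof.
  intros HS Hh1 Hh2 Hd1 Hd2.
  rewrite <- (survival_comp_incr_iff S HS). unfold c_prec.
  split; intros Hmono x y Hx Hxy; specialize (Hmono x y Hx Hxy);
    rewrite !(hazard_ratio_comp S h1 h2) in * by (assumption || lra); exact Hmono.
Qed.

Lemma decr_01_ratio_swap (a b : R -> R) :
  (forall p, 0 < p < 1 -> 0 < a p) -> (forall p, 0 < p < 1 -> 0 < b p) ->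
  decr_01 (fun p => b p / a p) <-> incr_01 (fun p => a p / b p).
Proof.
  intros Ha Hb. unfold decr_01, incr_01.
  assert (Hpos : forall f g p, (forall p, 0 < p < 1 -> 0 < f p) ->
            (forall p, 0 < p < 1 -> 0 < g p) -> 0 < p < 1 -> 0 < f p / g p).
  { intros f g r Hf Hg Hr. apply Rdiv_lt_0_compat; auto. }
  split; intros Hmono p q Hp Hpq Hq; specialize (Hmono p q Hp Hpq Hq);
    [ rewrite <- (Rinv_div (b p)), <- (Rinv_div (b q))
    | rewrite <- (Rinv_div (a p)), <- (Rinv_div (a q)) ];
    apply Rinv_le_contravar; try exact Hmono; apply Hpos; auto; lra.
Qed.

Theorem proposition3p1 (FbarX h1 h2 : R -> R) :
  lifetime_survival FbarX ->
  domination_function h1 ->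
  domination_function h2 ->
  (forall p, 0 < p < 1 -> 0 < Derive h1 p) ->
  (forall p, 0 < p < 1 -> 0 < Derive h2 p) ->
  let Fbar_tau1 := fun x => h1 (FbarX x) in
  let Fbar_tau2 := fun x => h2 (FbarX x) in
  (c_prec Fbar_tau1 Fbar_tau2 <-> decr_01 (fun p => Hfun h1 p / Hfun h2 p)) /\
  (c_prec Fbar_tau2 Fbar_tau1 <-> incr_01 (fun p => Hfun h1 p / Hfun h2 p)).
Proof.
  intros HF Hh1 Hh2 Hd1 Hd2 Fbar_tau1 Fbar_tau2. subst Fbar_tau1 Fbar_tau2. split.
  - exact (c_prec_comp_iff FbarX h1 h2 HF Hh1 Hh2 Hd1 Hd2).
  - rewrite (c_prec_comp_iff FbarX h2 h1 HF Hh2 Hh1 Hd2 Hd1).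
    apply decr_01_ratio_swap; apply Hfun_pos; assumption.
Qed.
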